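(* Let $Q$ be a smooth real function on an open interval, and let $C_1\neq 0$, $C_2$ and $\alpha_0$ be real constants. Let $G$ be an antiderivative $$G(\rho)=\int\frac{Q'(\rho)}{C_1(C_1\rho+C_2)}\,d\rho$$ on an open interval $J$ on which $C_1\rho+C_2\neq 0$. Assume $G$ is invertible on $J$, meaning that it is a diffeomorphism of $J$ onto its image. Then the function $$\rho(t,x)=G^{-1}\!\left(\frac{x+\alpha_0}{C_1}+t\right),$$ defined for all $(t,x)$ with $\frac{x+\alpha_0}{C_1}+t\in G(J)$, is a solution of the non-stationary filtration equation $\rho_t=(Q(\rho))_{xx}$.
   Context: In the paper, $Q(\rho)=\int\frac{k(\rho)\rho p'(\rho)}{\mu(\rho)}d\rho$, where $p$ is the pressure, $k$ the permeability and $\mu$ the viscosity, all given as functions of the density $\rho$ along a thermodynamic process. *)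

From Stdlib Require Import Reals.
From Coquelicot Require Import Coquelicot.
Open Scope R_scope.

Definition in_oint (a b : Rbar) (r : R) : Prop := Rbar_lt a r /\ Rbar_lt r b.

Definition smooth_on (D : R -> Prop) (f : R -> R) : Prop :=
  forall (n : nat) (r : R), D r -> ex_derive_n f n r.

Definition image (G : R -> R) (D : R -> Prop) (y : R) : Prop :=
  exists r, D r /\ G r = y.

Definition diffeo_onto_image (G Ginv : R -> R) (D : R -> Prop) : Prop :=
  smooth_on D G /\
  smooth_on (image G D) Ginv /\
  (forall r, D r -> Ginv (G r) = r) /\
  (forall y, image G D y -> D (Ginv y) /\ G (Ginv y) = y).

(* The profile is a travelling wave: writing xi = (x + alpha0)/C1 + t, the function rho = G^-1(xi)
   satisfies rho_t = (G^-1)'(xi) and rho_x = (G^-1)'(xi)/C1.  Since (G^-1)'(G r) G'(r) = 1 and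
   G' = Q'/(C1 (C1 r + C2)), the flux derivative Q(rho)_x = Q'(rho) rho_x collapses to the affine
   expression C1 rho + C2, whose x-derivative is C1 rho_x = rho_t.  The only non-local input is that
   G(J) is open, which follows from the intermediate value theorem because G is continuous and
   injective on the open interval J. *)

From Stdlib Require Import Reals Lra.
From Coquelicot Require Import Coquelicot.
Open Scope R_scope.

Lemma IVT_between (f : R -> R) (u v y : R) :
  u < v -> (forall z, u <= z <= v -> continuity_pt f z) ->
  (f u - y) * (f v - y) <= 0 -> exists z, u <= z <= v /\ f z = y.
Proof.
  intros Huv Hf Hy.
  destruct (Rle_dec (f u) (f v)) as [Hle | Hgt].
  - assert (Hbetween : f u <= y <= f v) by (split; nra).
    destruct (Ranalysis5.f_interv_is_interv f u v y Huv Hbetween Hf) as [z Hz].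
    now exists z.
  - assert (Hbetween : - f u <= - y <= - f v) by (split; nra).
    assert (Hopp : forall z, u <= z <= v -> continuity_pt (fun s => - f s) z)
      by (intros z Hz; apply continuity_pt_opp, Hf, Hz).
    destruct (Ranalysis5.f_interv_is_interv (fun s => - f s) u v (- y) Huv Hbetween Hopp)
      as [z [Hz Ez]].
    exists z; split; [exact Hz | lra].
Qed.

Lemma continuous_injective_straddle (f : R -> R) (r1 r0 r2 : R) :
  r1 < r0 < r2 -> (forall z, r1 <= z <= r2 -> continuity_pt f z) ->
  (forall z w, r1 <= z <= r2 -> r1 <= w <= r2 -> f z = f w -> z = w) ->
  (f r1 - f r0) * (f r2 - f r0) < 0.
Proof.
  intros Hr Hf Hinj.
  assert (H1 : f r1 <> f r0) by (intros E; apply Hinj in E; lra).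
  assert (H2 : f r2 <> f r0) by (intros E; apply Hinj in E; lra).
  destruct (Rlt_or_le ((f r1 - f r0) * (f r2 - f r0)) 0) as [Hlt | Hge]; [exact Hlt | exfalso].
  assert (Hpos : 0 < (f r1 - f r0) * (f r2 - f r0)).
  { destruct Hge as [Hgt | E]; [exact Hgt |].
    symmetry in E; apply Rmult_integral in E; destruct E as [E | E]; lra. }
  (* f r1 and f r2 lie on the same side of f r0, so the one nearer to f r0 is attained again
     on the far side of r0. *)
  destruct (Rle_dec ((f r0 - f r1) * (f r2 - f r1)) 0) as [Hnear | Hfar].
  - destruct (IVT_between f r0 r2 (f r1)) as [z [Hz Ez]]; [lra | intros; apply Hf; lra | lra |].
    apply Hinj in Ez; lra.
  - destruct (IVT_between f r1 r0 (f r2)) as [z [Hz Ez]]; [lra | intros; apply Hf; lra | nra |].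
    apply Hinj in Ez; lra.
Qed.

Lemma open_image_continuous_injective (f : R -> R) (J : R -> Prop) :
  open J -> (forall r, J r -> continuity_pt f r) ->
  (forall r s, J r -> J s -> f r = f s -> r = s) ->
  open (image f J).
Proof.
  intros HJ Hf Hinj y [r0 [Hr0 <-]].
  destruct (HJ r0 Hr0) as [eps Heps].
  pose proof (cond_pos eps) as Heps_pos.
  set (r1 := r0 - eps / 2); set (r2 := r0 + eps / 2).
  assert (Hseg : forall z, r1 <= z <= r2 -> J z).
  { intros z Hz; apply Heps; change (Rabs (z - r0) < eps).
    apply Rabs_def1; unfold r1, r2 in Hz; lra. }
  assert (Hstr : (f r1 - f r0) * (f r2 - f r0) < 0).
  { apply continuous_injective_straddle; unfold r1, r2 in *; try lra.
    - intros z Hz; apply Hf, Hseg; lra.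
    - intros z w Hz Hw; apply Hinj; apply Hseg; lra. }
  assert (Hdelta : 0 < Rmin (Rabs (f r1 - f r0)) (Rabs (f r2 - f r0))).
  { apply Rmin_glb_lt; apply Rabs_pos_lt; intros E; rewrite E in Hstr; lra. }
  exists (mkposreal _ Hdelta); intros y Hy.
  change (Rabs (y - f r0) < Rmin (Rabs (f r1 - f r0)) (Rabs (f r2 - f r0))) in Hy.
  pose proof (Rlt_le_trans _ _ _ Hy (Rmin_l _ _)) as Hy1.
  pose proof (Rlt_le_trans _ _ _ Hy (Rmin_r _ _)) as Hy2.
  destruct (IVT_between f r1 r2 y) as [z [Hz Ez]].
  - unfold r1, r2; lra.
  - intros z Hz; apply Hf, Hseg, Hz.
  - revert Hy1 Hy2 Hstr; unfold Rabs; repeat destruct Rcase_abs; intros; nra.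
  - exists z; split; [apply Hseg, Hz | exact Ez].
Qed.

Lemma Derive_inverse_mul (f g : R -> R) (r l : R) :
  locally r (fun s => g (f s) = s) -> is_derive f r l -> ex_derive g (f r) ->
  Derive g (f r) * l = 1.
Proof.
  intros Hinv Hf Hg.
  assert (Hgf : is_derive (fun s => g (f s)) r (l * Derive g (f r)))
    by (apply (is_derive_comp g f); [apply Derive_correct, Hg | exact Hf]).
  assert (Hid : is_derive (fun s : R => s) r (l * Derive g (f r)))
    by exact (is_derive_ext_loc _ _ _ _ Hinv Hgf).
  rewrite Rmult_comm, <- (is_derive_unique _ _ _ Hid).
  apply is_derive_unique, (is_derive_id (K := R_AbsRing)).
Qed.

Section TravellingWave.

Variables (J : R -> Prop) (Q G Ginv : R -> R) (C1 C2 alpha0 t : R).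

Hypothesis J_open : open J.
Hypothesis C1_neq0 : C1 <> 0.
Hypothesis affine_neq0 : forall r, J r -> C1 * r + C2 <> 0.
Hypothesis Q_derivable : forall r, J r -> ex_derive Q r.
Hypothesis G_derive : forall r, J r -> is_derive G r (Derive Q r / (C1 * (C1 * r + C2))).
Hypothesis Ginv_G : forall r, J r -> Ginv (G r) = r.
Hypothesis G_Ginv : forall y, image G J y -> J (Ginv y) /\ G (Ginv y) = y.
Hypothesis Ginv_derivable : forall y, image G J y -> ex_derive Ginv y.

Lemma open_image_G : open (image G J).
Proof.
  apply open_image_continuous_injective; [exact J_open | |].
  - intros r Hr; apply continuity_pt_filterlim.
    apply (ex_derive_continuous (K := R_AbsRing) (V := R_NormedModule)).
    eexists; apply G_derive, Hr.
  - intros r s Hr Hs E.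
    now rewrite <- (Ginv_G r Hr), <- (Ginv_G s Hs), E.
Qed.

Lemma is_derive_Q_Ginv (y : R) :
  image G J y -> is_derive (fun u => Q (Ginv u)) y (C1 * (C1 * Ginv y + C2)).
Proof.
  intros Hy; destruct (G_Ginv y Hy) as [Hr Ey]; set (r := Ginv y) in *.
  (* Kept as a product: no division by G'(r), whose nonvanishing only follows from this identity. *)
  assert (Hmul : Derive Ginv y * (Derive Q r / (C1 * (C1 * r + C2))) = 1).
  { rewrite <- Ey; apply Derive_inverse_mul.
    - apply (filter_imp J); [exact Ginv_G | exact (J_open r Hr)].
    - exact (G_derive r Hr).
    - rewrite Ey; exact (Ginv_derivable y Hy). }
  replace (C1 * (C1 * r + C2)) with (Derive Ginv y * Derive Q r).
  - exact (is_derive_comp Q Ginv y _ _ (Derive_correct _ _ (Q_derivable r Hr))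
             (Derive_correct _ _ (Ginv_derivable y Hy))).
  - pose proof (affine_neq0 r Hr).
    rewrite <- (Rmult_1_r (C1 * (C1 * r + C2))), <- Hmul; field; auto.
Qed.

Lemma is_derive_wave_arg (x : R) : is_derive (fun w => (w + alpha0) / C1 + t) x (/ C1).
Proof. auto_derive; [exact I | field; exact C1_neq0]. Qed.

Lemma locally_wave_in_image (x : R) :
  image G J ((x + alpha0) / C1 + t) ->
  locally x (fun z => image G J ((z + alpha0) / C1 + t)).
Proof.
  intros Hx.
  apply (ex_derive_continuous (K := R_AbsRing) (V := R_NormedModule)
           (fun w => (w + alpha0) / C1 + t) x).
  - eexists; apply is_derive_wave_arg.
  - exact (open_image_G _ Hx).
Qed.

Lemma is_derive_wave_time (x : R) :
  image G J ((x + alpha0) / C1 + t) ->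
  is_derive (fun s => Ginv ((x + alpha0) / C1 + s)) t (Derive Ginv ((x + alpha0) / C1 + t)).
Proof.
  intros Hx.
  rewrite <- (Rmult_1_l (Derive Ginv _)).
  apply (is_derive_comp Ginv (fun s => (x + alpha0) / C1 + s)).
  - apply Derive_correct, Ginv_derivable, Hx.
  - auto_derive; [exact I | ring].
Qed.

Lemma is_derive_Q_wave (z : R) :
  image G J ((z + alpha0) / C1 + t) ->
  is_derive (fun w => Q (Ginv ((w + alpha0) / C1 + t))) z
            (C1 * Ginv ((z + alpha0) / C1 + t) + C2).
Proof.
  intros Hz.
  replace (C1 * _ + C2) with (/ C1 * (C1 * (C1 * Ginv ((z + alpha0) / C1 + t) + C2)))
    by (field; exact C1_neq0).
  apply (is_derive_comp (fun u => Q (Ginv u)) (fun w => (w + alpha0) / C1 + t)).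
  - apply is_derive_Q_Ginv, Hz.
  - apply is_derive_wave_arg.
Qed.

Lemma is_derive_affine_flux (x : R) :
  image G J ((x + alpha0) / C1 + t) ->
  is_derive (fun z => C1 * Ginv ((z + alpha0) / C1 + t) + C2) x
            (Derive Ginv ((x + alpha0) / C1 + t)).
Proof.
  intros Hx.
  replace (Derive Ginv _) with (C1 * (/ C1 * Derive Ginv ((x + alpha0) / C1 + t)) + 0)
    by (field; exact C1_neq0).
  apply (is_derive_plus (fun z => C1 * Ginv ((z + alpha0) / C1 + t)) (fun _ => C2));
    [apply is_derive_scal | auto_derive; [exact I | reflexivity]].
  apply (is_derive_comp Ginv (fun w => (w + alpha0) / C1 + t)).
  - apply Derive_correct, Ginv_derivable, Hx.
  - apply is_derive_wave_arg.
Qed.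

End TravellingWave.

Theorem mainTheorem2
  (a b c d : Rbar) (Q G Ginv : R -> R) (C1 C2 alpha0 : R) :
  (* Q smooth on the open interval I = (a,b) *)
  smooth_on (in_oint a b) Q ->
  C1 <> 0 ->
  (* J = (c,d) is an open interval contained in I on which C1 rho + C2 <> 0 *)
  (forall r, in_oint c d r -> in_oint a b r) ->
  (forall r, in_oint c d r -> C1 * r + C2 <> 0) ->
  (* G is an antiderivative of Q'(rho) / (C1 (C1 rho + C2)) on J *)
  (forall r, in_oint c d r ->
     is_derive G r (Derive Q r / (C1 * (C1 * r + C2)))) ->
  (* G is a diffeomorphism of J onto G(J), with inverse Ginv *)
  diffeo_onto_image G Ginv (in_oint c d) ->
  let rho := fun t x => Ginv ((x + alpha0) / C1 + t) in
  forall t x : R,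
    image G (in_oint c d) ((x + alpha0) / C1 + t) ->
    ex_derive (fun s => rho s x) t /\
    locally x (fun z => ex_derive (fun w => Q (rho t w)) z) /\
    is_derive (fun z => Derive (fun w => Q (rho t w)) z) x
              (Derive (fun s => rho s x) t).
Proof.
  intros HQ HC1 HJI HJ0 HG [_ [HGinv [HGinvG HGGinv]]] rho t x Hx; unfold rho; cbv beta.
  assert (HJ : open (in_oint c d)) by exact (open_and _ _ (open_Rbar_gt c) (open_Rbar_lt d)).
  assert (HQ1 : forall r, in_oint c d r -> ex_derive Q r) by (intros r Hr; exact (HQ 1%nat r (HJI r Hr))).
  assert (HGinv1 : forall y, image G (in_oint c d) y -> ex_derive Ginv y)
    by (intros y Hy; exact (HGinv 1%nat y Hy)).
  assert (Htime := is_derive_wave_time (in_oint c d) G Ginv C1 alpha0 t HGinv1 x Hx).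
  assert (Hloc : locally x (fun z => image G (in_oint c d) ((z + alpha0) / C1 + t)))
    by (eapply locally_wave_in_image; eassumption).
  assert (Hflux : forall z, image G (in_oint c d) ((z + alpha0) / C1 + t) ->
            is_derive (fun w => Q (Ginv ((w + alpha0) / C1 + t))) z
                      (C1 * Ginv ((z + alpha0) / C1 + t) + C2))
    by (intros z Hz; eapply is_derive_Q_wave; eassumption).
  split; [|split].
  - eexists; exact Htime.
  - apply (filter_imp _ _ (fun z Hz => ex_intro _ _ (Hflux z Hz)) Hloc).
  - replace (Derive _ t) with (Derive Ginv ((x + alpha0) / C1 + t))
      by (symmetry; exact (is_derive_unique _ _ _ Htime)).
    apply (is_derive_ext_loc (fun z => C1 * Ginv ((z + alpha0) / C1 + t) + C2)).
    + apply (filter_imp _ _ (fun z Hz => eq_sym (is_derive_unique _ _ _ (Hflux z Hz))) Hloc).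
    + exact (is_derive_affine_flux (in_oint c d) G Ginv C1 C2 alpha0 t HC1 HGinv1 x Hx).
Qed.
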